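(* Let $e_1,e_2,e_3$ be nonzero integers with $e_1+e_2+e_3=0$, $\gcd(e_1,e_2,e_3)\in\{1,2\}$ and $v_2(e_1)=v_2(e_2)<v_2(e_3)$. Let $(a,b,c)$ be a primitive triple of odd integers with $e_1a^2+e_2b^2+e_3c^2=0$ and $a\equiv b\equiv c\equiv 1\pmod 4$. Let $n$ be a positive integer all of whose prime factors are nonzero quadratic residues modulo each odd prime factor of $e_1e_2e_3$. Then $\frac18(a+b)(b+c)(c+a)$ is an integer congruent to $1$ modulo $4$, and it is a quadratic residue modulo each prime factor of $n$.
   Context: $v_2$ denotes the $2$-adic valuation. *)

From mathcomp Require Import all_boot all_algebra.
Set Implicit Arguments. Unset Strict Implicit. Unset Printing Implicit Defensive.
Import GRing.Theory Num.Theory.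
Local Open Scope ring_scope.

Definition v2 (z : int) : nat := logn 2 `|z|%N.

Definition is_qr (m : int) (q : nat) : Prop :=
  exists x : int, (x ^+ 2 = m %[mod q%:Z])%Z.

Definition is_nonzero_qr (m : int) (q : nat) : Prop :=
  ~~ (q%:Z %| m)%Z /\ is_qr m q.

(* With a = 4A + 1, b = 4B + 1, c = 4C + 1 the number
   N = (a + b)(b + c)(c + a) / 8 = (2A + 2B + 1)(2B + 2C + 1)(2C + 2A + 1)
   is 1 mod 4.  For an odd prime p | n not dividing N, Euler's criterion reduces
   the claim to N^((p-1)/2) = 1 mod p.  Let r be a prime factor of |N|.  If
   r | e1 e2 e3 then p is a square mod r by hypothesis.  Otherwise the r-adic
   valuation of (a + b)(b + c)(c + a) is even: e1 + e2 + e3 = 0 turns the conic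
   into e1 (a^2 - b^2) = e3 (b^2 - c^2) and e2 (a^2 - b^2) = e3 (c^2 - a^2), so
   the three differences of squares have a common valuation k; when k > 0,
   r divides none of a, b, c, a sum x + y divisible by r has valuation exactly
   k, and a = +-b = +-c mod r forces an even number of such sums.  Hence the
   Jacobi symbol (p / |N|) is 1, and Jacobi reciprocity, obtained from
   quadratic reciprocity (Eisenstein's lemma and the lattice-point count),
   gives (|N| / p) = (-1)^((p-1)/2 (|N|-1)/2) = (sgn N / p). *)

From mathcomp Require Import all_boot all_algebra all_field.
From mathcomp Require Import zify ring.
Set Implicit Arguments. Unset Strict Implicit. Unset Printing Implicit Defensive.
Import GRing.Theory Num.Theory.
Local Open Scope ring_scope.

Lemma expf_card_pred (F : finFieldType) (x : F) : x != 0 -> x ^+ #|F|.-1 = 1.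
Proof.
move=> x_nz; apply: (mulIf x_nz); rewrite mul1r -exprSr prednK ?expf_card //.
by rewrite (cardD1 x).
Qed.

Section PrimeField.
Variable p : nat.
Hypothesis p_pr : prime p.

Lemma Fp_nat_eq0 n : (n%:R == 0 :> 'F_p) = (p %| n)%N.
Proof. by rewrite (dvdn_pcharf (pchar_Fp p_pr)). Qed.

Lemma Fp_int_eq0 z : (z%:~R == 0 :> 'F_p) = (p%:Z %| z)%Z.
Proof.
case: z => n; rewrite dvdzE /=; first exact: Fp_nat_eq0.
by rewrite NegzE mulrNz oppr_eq0 Fp_nat_eq0.
Qed.

Lemma Fp_int_eq a b : (a%:~R == b%:~R :> 'F_p) = (a == b %[mod p])%Z.
Proof. by rewrite eqz_mod_dvd -Fp_int_eq0 intrB subr_eq0. Qed.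

Lemma Fp_fermat (x : 'F_p) : x != 0 -> x ^+ p.-1 = 1.
Proof. by move=> x_nz; have := @expf_card_pred _ x x_nz; rewrite card_Fp. Qed.

Lemma is_qr_Fp (m : int) : (exists y : 'F_p, y ^+ 2 = m%:~R) -> is_qr m p.
Proof.
case=> y y2m; exists (y : nat)%:Z; apply/eqP; rewrite -Fp_int_eq rmorphXn /=.
by rewrite -y2m; apply/eqP; congr (_ ^+ 2); apply: natr_Zp.
Qed.

Hypothesis p_odd : odd p.

Lemma Fp_two_nz : (2%:R : 'F_p) != 0.
Proof.
rewrite Fp_nat_eq0 //; apply/negP => /dvdn_leq.
by have := prime_gt1 p_pr; move: p_odd; clear; lia.
Qed.

Lemma Fp_sign_eq1 n : ((-1) ^+ n = 1 :> 'F_p) -> ~~ odd n.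
Proof.
rewrite -signr_odd; case: (odd n) => //; rewrite expr1 => /eqP.
by rewrite eq_sym -addr_eq0 -[1 + 1]/(2%:R : 'F_p) (negbTE Fp_two_nz).
Qed.

Lemma Fp_euler_pow_sqr (y : 'F_p) : y != 0 -> (y ^+ 2) ^+ p./2 = 1.
Proof. by move=> y_nz; rewrite -exprM mul2n odd_halfK // Fp_fermat. Qed.

Lemma nonzero_qr_euler_pow (m : nat) : is_nonzero_qr m%:Z p -> (m%:R : 'F_p) ^+ p./2 = 1.
Proof.
case=> p_ndvd_m [x x2m]; move/eqP: x2m; rewrite -Fp_int_eq rmorphXn /= => /eqP x2m.
rewrite -[m%:R]/((m%:Z)%:~R : 'F_p) -x2m Fp_euler_pow_sqr //.
by apply: contra p_ndvd_m => /eqP x0; rewrite -Fp_int_eq0 -x2m x0 expr0n.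
Qed.

Lemma Fp_sqr_half_inj m n : (0 < m <= p./2)%N -> (0 < n <= p./2)%N ->
  (m%:R ^+ 2 = n%:R ^+ 2 :> 'F_p) -> m = n.
Proof.
move=> m_bd n_bd /eqP; rewrite eqf_sqr; rewrite -divn2 in m_bd n_bd; case/orP.
  by rewrite -val_eqE /= !val_Fp_nat // !modn_small; [move/eqP | lia | lia].
by rewrite -subr_eq0 opprK -natrD Fp_nat_eq0 => /dvdn_leq; lia.
Qed.

Lemma Fp_euler_criterion (x : 'F_p) : x ^+ p./2 = 1 -> exists y : 'F_p, y ^+ 2 = x.
Proof.
move=> x_euler.
have [/existsP[y /eqP <-] | x_nsq] := boolP [exists y : 'F_p, y ^+ 2 == x]; first by exists y.
exfalso.
(* Otherwise x, 1^2, ..., (p./2)^2 are p./2 + 1 distinct roots of X^(p./2) - 1. *)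
pose sq := [seq (i%:R : 'F_p) ^+ 2 | i <- iota 1 p./2].
have roots : all (root ('X^(p./2) - 1)) (x :: sq).
  apply/allP => y /predU1P[-> | /mapP[i]]; first by rewrite rootE !hornerE x_euler subrr.
  rewrite mem_iota => i_bd ->; rewrite rootE !hornerE Fp_euler_pow_sqr ?subrr //.
  by rewrite Fp_nat_eq0 //; apply/negP => /dvdn_leq; move: i_bd p_odd; rewrite -divn2; lia.
have sq_uniq : uniq (x :: sq).
  rewrite /= map_inj_in_uniq ?iota_uniq ?andbT.
    by apply: contra x_nsq => /mapP[i _ ->]; apply/existsP; exists i%:R.
  by move=> i j; rewrite !mem_iota => i_bd j_bd; apply: Fp_sqr_half_inj; lia.
have poly_nz : 'X^(p./2) - 1 != 0 :> {poly 'F_p}.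
  by rewrite -size_poly_eq0 size_XnsubC // half_gt0 prime_gt1.
have := max_poly_roots poly_nz roots sq_uniq.
by rewrite size_XnsubC ?half_gt0 ?prime_gt1 //= size_map size_iota ltnn.
Qed.

End PrimeField.

Definition eisenstein_sum (p q : nat) : nat := \sum_(1 <= i < p./2.+1) q * i %/ p.

Lemma prime_mul_neq p q i j : prime p -> ~~ (p %| q)%N -> (0 < i < p)%N ->
  (p * j != q * i)%N.
Proof.
move=> p_pr p_ndvd_q i_bd; apply/eqP => pj_qi.
have /dvdn_leq : (p %| i)%N.
  by have := dvdn_mulr j (dvdnn p); rewrite pj_qi Euclid_dvdM // (negbTE p_ndvd_q).
by lia.
Qed.

Section Eisenstein.
Variables p q : nat.
Hypotheses (p_pr : prime p) (p_odd : odd p) (q_odd : odd q) (p_ndvd_q : ~~ (p %| q)%N).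

Let h := p./2.
Let r i := (q * i %% p)%N.
Let neg i := (h < r i)%N.
Let f i := if neg i then (p - r i)%N else r i.

Lemma gauss_res_bounds i : (0 < i <= h)%N -> (0 < r i < p)%N.
Proof.
move=> i_bd; rewrite /r (ltn_pmod _ (prime_gt0 p_pr)) andbT lt0n; apply/negP => /eqP.
have := @prime_mul_neq p q i (q * i %/ p) p_pr p_ndvd_q.
rewrite /h -divn2 in i_bd; rewrite [(p * _)%N]mulnC {2}(divn_eq (q * i) p); lia.
Qed.

Lemma gauss_fold_bounds i : (0 < i <= h)%N -> (0 < f i <= h)%N.
Proof.
by move=> /gauss_res_bounds; rewrite /f /neg /h -divn2; case: ifP; lia.
Qed.

Lemma Fp_gauss_fold i : (0 < i <= h)%N -> ((q * i)%:R : 'F_p) = (-1) ^+ neg i * (f i)%:R.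
Proof.
move=> /gauss_res_bounds /andP[_ /ltnW r_le]; rewrite -Fp_nat_mod // -/(r i) /f.
case: (neg i); last by rewrite mul1r.
by rewrite natrB // pchar_Fp_0 // sub0r expr1 mulN1r opprK.
Qed.

Lemma perm_gauss_fold : perm_eq [seq f i | i <- index_iota 1 h.+1] (index_iota 1 h.+1).
Proof.
have q_nz : (q%:R : 'F_p) != 0 by rewrite Fp_nat_eq0.
have f_inj : {in index_iota 1 h.+1 &, injective f}.
  move=> i j; rewrite !mem_index_iota !ltnS => i_bd j_bd fij.
  apply: (Fp_sqr_half_inj p_pr p_odd i_bd j_bd).
  have : (q%:R * i%:R) ^+ 2 = (q%:R * j%:R) ^+ 2 :> 'F_p.
    by rewrite -!natrM !Fp_gauss_fold // !exprMn !sqrr_sign fij.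
  by rewrite !exprMn => /(mulfI (expf_neq0 2 q_nz)).
have f_uniq : uniq [seq f i | i <- index_iota 1 h.+1].
  by rewrite map_inj_in_uniq ?iota_uniq.
have f_sub : {subset [seq f i | i <- index_iota 1 h.+1] <= index_iota 1 h.+1}.
  move=> y /mapP[i]; rewrite !mem_index_iota !ltnS => /gauss_fold_bounds ? -> //.
have [_ f_eq] := uniq_min_size f_uniq f_sub (eq_leq (esym (size_map _ _))).
by apply: uniq_perm; rewrite ?iota_uniq.
Qed.

Lemma gauss_lemma : (q%:R : 'F_p) ^+ h = (-1) ^+ (\sum_(1 <= i < h.+1) neg i).
Proof.
pose P := \prod_(1 <= i < h.+1) (i%:R : 'F_p).
have P_nz : P != 0.
  rewrite prodf_seq_neq0; apply/allP => i; rewrite mem_index_iota ltnS => i_bd.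
  by rewrite Fp_nat_eq0 //; apply/negP => /dvdn_leq; move: i_bd; rewrite /h -divn2; lia.
have prod_qi : \prod_(1 <= i < h.+1) ((q * i)%:R : 'F_p) = q%:R ^+ h * P.
  rewrite (eq_bigr (fun i => q%:R * i%:R)) => [|i _]; last exact: natrM.
  by rewrite big_split prodr_const_nat subn1.
have prod_fold : \prod_(1 <= i < h.+1) ((f i)%:R : 'F_p) = P.
  by rewrite -(big_map f predT (fun j => j%:R : 'F_p)) (perm_big _ perm_gauss_fold).
apply: (mulIf P_nz); rewrite -prod_qi.
rewrite (eq_big_nat _ _ (F2 := fun i => (-1) ^+ neg i * (f i)%:R)) => [|i]; last first.
  by rewrite ltnS; apply: Fp_gauss_fold.
rewrite big_split /= prod_fold; congr (_ * _).
by rewrite (big_morph _ (exprD (-1)) (expr0 (-1))).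
Qed.

Lemma odd_eisenstein_sum :
  odd (eisenstein_sum p q) = odd (\sum_(1 <= i < h.+1) neg i).
Proof.
set S := (\sum_(1 <= i < h.+1) i)%N; set N := (\sum_(1 <= i < h.+1) neg i)%N.
have sum_qi : (q * S = eisenstein_sum p q * p + \sum_(1 <= i < h.+1) r i)%N.
  rewrite big_distrr big_distrl -big_split; apply: eq_bigr => i _; exact: divn_eq.
have sum_fold : (\sum_(1 <= i < h.+1) r i + 2 * \sum_(1 <= i < h.+1) neg i * f i
                 = S + N * p)%N.
  have -> : S = (\sum_(1 <= i < h.+1) f i)%N by rewrite /S -(perm_big _ perm_gauss_fold) big_map.
  rewrite big_distrr big_distrl -!big_split; apply: eq_big_nat => i.
  by rewrite ltnS => /gauss_res_bounds; rewrite /f /neg; case: ifP => /=; lia.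
move: (congr1 odd sum_qi) (congr1 odd sum_fold).
rewrite mul2n !oddD odd_double !oddM q_odd p_odd andTb andbT addbF => qi fold.
move: qi; rewrite fold.
by case: (odd S); case: (odd (eisenstein_sum p q)); case: (odd N).
Qed.

Lemma eisenstein_lemma : (q%:R : 'F_p) ^+ p./2 = (-1) ^+ eisenstein_sum p q.
Proof. by rewrite gauss_lemma -signr_odd -odd_eisenstein_sum signr_odd. Qed.

End Eisenstein.

Lemma sum_nat_leq H K : (\sum_(1 <= j < H.+1) (j <= K) = minn H K)%N.
Proof.
elim: H => [|H IH]; first by rewrite big_geq ?min0n.
by rewrite big_nat_recr //= IH; case: ltnP; lia.
Qed.

Lemma divn_lattice_count p q i : prime p -> ~~ (p %| q)%N -> odd p -> odd q ->
  (0 < i <= p./2)%N -> (q * i %/ p = \sum_(1 <= j < q./2.+1) (p * j < q * i))%N.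
Proof.
move=> p_pr p_ndvd_q p_odd q_odd i_bd.
have p_gt0 := prime_gt0 p_pr.
have -> : (\sum_(1 <= j < q./2.+1) (p * j < q * i)
           = \sum_(1 <= j < q./2.+1) (j <= q * i %/ p))%N.
  have i_lt_p : (0 < i < p)%N by move: i_bd; rewrite -divn2; lia.
  apply: eq_big_nat => j _.
  by rewrite leq_divRL // [(j * p)%N]mulnC ltn_neqAle (prime_mul_neq j p_pr p_ndvd_q i_lt_p).
rewrite sum_nat_leq; apply/esym/minn_idPr.
by rewrite -ltnS ltn_divLR //; move: i_bd; rewrite -!divn2; nia.
Qed.

Lemma eisenstein_sum_sym p q : prime p -> prime q -> odd p -> odd q -> p != q ->
  (eisenstein_sum p q + eisenstein_sum q p = p./2 * q./2)%N.
Proof.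
move=> p_pr q_pr p_odd q_odd p_neq_q.
have p_ndvd_q : ~~ (p %| q)%N by rewrite dvdn_prime2.
have q_ndvd_p : ~~ (q %| p)%N by rewrite dvdn_prime2 // eq_sym.
have rows : eisenstein_sum p q
    = (\sum_(1 <= i < p./2.+1) \sum_(1 <= j < q./2.+1) (p * j < q * i))%N.
  by apply: eq_big_nat => i; rewrite ltnS; apply: divn_lattice_count.
have cols : eisenstein_sum q p
    = (\sum_(1 <= i < p./2.+1) \sum_(1 <= j < q./2.+1) (q * i < p * j))%N.
  by rewrite exchange_big_nat; apply: eq_big_nat => j; rewrite ltnS; apply: divn_lattice_count.
rewrite rows cols -big_split /=.
rewrite (eq_big_nat _ _ (F2 := fun=> q./2)) => [|i]; first by rewrite sum_nat_const_nat subn1.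
rewrite ltnS => i_bd; rewrite -big_split /=.
rewrite (eq_big_nat _ _ (F2 := fun=> 1%N)) => [|j _].
  by rewrite sum_nat_const_nat subn1 muln1.
have i_lt_p : (0 < i < p)%N by move: i_bd; rewrite -divn2; lia.
by have := prime_mul_neq j p_pr p_ndvd_q i_lt_p; case: ltngtP.
Qed.

Lemma quadratic_reciprocity p q : prime p -> prime q -> odd p -> odd q -> p != q ->
  (p%:R : 'F_q) ^+ q./2 = 1 -> (q%:R : 'F_p) ^+ p./2 = (-1) ^+ (p./2 * q./2).
Proof.
move=> p_pr q_pr p_odd q_odd p_neq_q p_sq_mod_q.
have p_ndvd_q : ~~ (p %| q)%N by rewrite dvdn_prime2.
have q_ndvd_p : ~~ (q %| p)%N by rewrite dvdn_prime2 // eq_sym.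
have even_qp : ~~ odd (eisenstein_sum q p).
  by apply: (Fp_sign_eq1 q_pr q_odd); rewrite -eisenstein_lemma.
rewrite eisenstein_lemma // -signr_odd -[RHS]signr_odd.
by rewrite -(eisenstein_sum_sym p_pr q_pr) // oddD (negbTE even_qp) addbF.
Qed.

Lemma odd_half_mul m n : odd m -> odd n -> odd (m * n)./2 = odd m./2 (+) odd n./2.
Proof. by move=> m_odd n_odd; rewrite -!divn2; lia. Qed.

Section JacobiReciprocity.
Variable p : nat.
Hypotheses (p_pr : prime p) (p_odd : odd p).

(* The reciprocity law for (m / p) when (p / m) = 1. *)
Let jacobi_law m := odd m /\ (m%:R : 'F_p) ^+ p./2 = (-1) ^+ (p./2 * m./2).

Lemma jacobi_law_mul m n : jacobi_law m -> jacobi_law n -> jacobi_law (m * n).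
Proof.
move=> [m_odd m_law] [n_odd n_law]; split; first by rewrite oddM m_odd.
rewrite natrM exprMn m_law n_law -exprD -[LHS]signr_odd -[RHS]signr_odd.
by rewrite oddD !oddM odd_half_mul // andb_addr.
Qed.

Lemma jacobi_law_exp m e : jacobi_law m -> jacobi_law (m ^ e).
Proof.
move=> m_law; elim: e => [|e IH]; first by split; rewrite //= expr1n muln0.
by rewrite expnS; apply: jacobi_law_mul.
Qed.

Lemma jacobi_law_sqr r : odd r -> ~~ (p %| r)%N -> jacobi_law (r ^ 2).
Proof.
move=> r_odd p_ndvd_r; split; first by rewrite oddX r_odd orbT.
have r_nz : (r%:R : 'F_p) != 0 by rewrite Fp_nat_eq0.
rewrite natrX Fp_euler_pow_sqr // -signr_odd oddM.
by rewrite -mulnn odd_half_mul // addbb andbF.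
Qed.

Lemma jacobi_reciprocity M : odd M -> ~~ (p %| M)%N ->
  (forall r, prime r -> (r %| M)%N -> (p%:R : 'F_r) ^+ r./2 = 1 \/ ~~ odd (logn r M)) ->
  (M%:R : 'F_p) ^+ p./2 = (-1) ^+ (p./2 * M./2).
Proof.
move=> M_odd p_ndvd_M M_primes.
have M_gt0 : (0 < M)%N by case: M M_odd {p_ndvd_M M_primes}.
suff [] : jacobi_law M by [].
rewrite (prod_prime_decomp M_gt0) prime_decompE big_map big_seq /=.
apply: big_ind => [|m n|r]; [by split; rewrite //= expr1n muln0 | exact: jacobi_law_mul |].
rewrite mem_primes => /and3P[r_pr _ r_dvd_M].
have r_odd : odd r := dvdn_odd r_dvd_M M_odd.
have r_neq_p : r != p by apply: contraNneq p_ndvd_M => <-.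
case: (M_primes r r_pr r_dvd_M) => [p_sq_mod_r | even_val].
  apply/jacobi_law_exp; split=> //.
  by apply: quadratic_reciprocity; rewrite // eq_sym.
rewrite -(even_halfK even_val) -mul2n expnM; apply/jacobi_law_exp/jacobi_law_sqr => //.
by apply: contra p_ndvd_M => /dvdn_trans; apply.
Qed.

End JacobiReciprocity.

Lemma sums_eq0_count_even (R : idomainType) (x y z : R) : 2 != 0 :> R -> x != 0 ->
  x ^+ 2 = y ^+ 2 -> y ^+ 2 = z ^+ 2 -> ~~ odd ((x + y == 0)%R + (y + z == 0)%R + (z + x == 0)%R)%N.
Proof.
move=> two_nz x_nz /esym/eqP + /esym/eqP; rewrite !eqf_sqr.
have xx_nz : x + x != 0 by rewrite -mulr2n -mulr_natl mulf_neq0.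
by case/orP=> /eqP ->; case/orP=> /eqP ->;
  rewrite ?opprK ?addrN ?addNr ?eqxx -?opprD ?oppr_eq0 ?(negbTE xx_nz).
Qed.

Lemma conic_diff_sqr (R : comPzRingType) (e1 e2 e3 a b c : R) :
  e1 + e2 + e3 = 0 -> e1 * a ^+ 2 + e2 * b ^+ 2 + e3 * c ^+ 2 = 0 ->
  e1 * (a ^+ 2 - b ^+ 2) = e3 * (b ^+ 2 - c ^+ 2) /\
  e2 * (a ^+ 2 - b ^+ 2) = e3 * (c ^+ 2 - a ^+ 2).
Proof.
move=> /eqP; rewrite -addrA addr_eq0 => /eqP -> conic.
split; apply/eqP; rewrite -subr_eq0; [rewrite -conic | rewrite -oppr_eq0 -conic];
  by apply/eqP; ring.
Qed.

Section OddPrimeValuation.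
Variable q : nat.
Hypotheses (q_pr : prime q) (q_odd : odd q).
Local Notation v x := (logn q (absz x)).

Lemma logn_absz_ndvd x : ~~ (q%:Z %| x)%Z -> v x = 0%N.
Proof. by move=> q_ndvd_x; apply: logn_coprime; rewrite prime_coprime // -dvdzE. Qed.

Lemma logn_absz_ndvdM e x : ~~ (q%:Z %| e)%Z -> v (e * x) = v x.
Proof.
move=> q_ndvd_e; have [-> | x_nz] := eqVneq x 0; first by rewrite mulr0.
have e_nz : e != 0 by apply: contraNneq q_ndvd_e => ->.
by rewrite abszM lognM ?absz_gt0 // logn_absz_ndvd.
Qed.

Lemma logn_absz_add x y : ~~ (q%:Z %| x)%Z ->
  v (x + y) = ((q%:Z %| (x + y)%R)%Z * v (x ^+ 2 - y ^+ 2)%R)%N.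
Proof.
move=> q_ndvd_x; have -> : x ^+ 2 - y ^+ 2 = (x - y) * (x + y) by ring.
have [q_dvd_xy | ] := boolP (q%:Z %| x + y)%Z; last by move/logn_absz_ndvd.
rewrite mul1n logn_absz_ndvdM //; apply: contra q_ndvd_x.
move: q_dvd_xy; rewrite -!Fp_int_eq0 // rmorphD rmorphB /= => /eqP sum0 /eqP dif0.
have : 2%:R * x%:~R = 0 :> 'F_q.
  rewrite -(addr0 0) -{1}sum0 -dif0; ring.
by move/eqP; rewrite mulf_eq0 (negbTE (Fp_two_nz q_pr q_odd)).
Qed.

Lemma dvdz_ndvdM e x : ~~ (q%:Z %| e)%Z -> (q%:Z %| e * x)%Z = (q%:Z %| x)%Z.
Proof. by rewrite -!Fp_int_eq0 // rmorphM mulf_eq0 => /negbTE ->. Qed.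

Lemma Fp_int_sqr_eq x y : (q%:Z %| x ^+ 2 - y ^+ 2)%Z -> x%:~R ^+ 2 = y%:~R ^+ 2 :> 'F_q.
Proof. by rewrite -Fp_int_eq0 // rmorphB !rmorphXn /= subr_eq0 => /eqP. Qed.

Lemma dvdz_sqrB x y : (q%:Z %| x ^+ 2 - y ^+ 2)%Z -> (q%:Z %| x)%Z = (q%:Z %| y)%Z.
Proof. by move/Fp_int_sqr_eq => xy; rewrite -!Fp_int_eq0 // -sqrf_eq0 xy sqrf_eq0. Qed.

Lemma logn_dvdz_ndvdM_eq e e' x y : ~~ (q%:Z %| e)%Z -> ~~ (q%:Z %| e')%Z ->
  e * x = e' * y -> v x = v y /\ (q%:Z %| x)%Z = (q%:Z %| y)%Z.
Proof.
move=> e_nd e'_nd exy; split.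
  by rewrite -(logn_absz_ndvdM _ e_nd) exy logn_absz_ndvdM.
by rewrite -(dvdz_ndvdM _ e_nd) exy dvdz_ndvdM.
Qed.

Lemma logn_prod_sums_even (e1 e2 e3 a b c : int) : ~~ (q%:Z %| e1 * e2 * e3)%Z ->
  e1 + e2 + e3 = 0 -> e1 * a ^+ 2 + e2 * b ^+ 2 + e3 * c ^+ 2 = 0 ->
  ~~ [&& q%:Z %| a, q%:Z %| b & q%:Z %| c]%Z -> (a + b) * (b + c) * (c + a) != 0 ->
  ~~ odd (v ((a + b) * (b + c) * (c + a))).
Proof.
move=> e_nd e_sum conic abc_nd.
have [e1_nd e2_nd e3_nd] : [/\ ~~ (q%:Z %| e1)%Z, ~~ (q%:Z %| e2)%Z & ~~ (q%:Z %| e3)%Z].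
  by move: e_nd; rewrite -!Fp_int_eq0 // !rmorphM /= !mulf_eq0 !negb_or => /andP[/andP[-> ->] ->].
have [rel_bc rel_ca] := conic_diff_sqr e_sum conic.
have [v_bc d_bc] := logn_dvdz_ndvdM_eq e3_nd e1_nd (esym rel_bc).
have [v_ca d_ca] := logn_dvdz_ndvdM_eq e3_nd e2_nd (esym rel_ca).
rewrite !mulf_eq0 !negb_or -andbA => /and3P[ab_nz bc_nz ca_nz].
rewrite !abszM !lognM ?muln_gt0 ?absz_gt0 ?ab_nz ?bc_nz ?ca_nz //.
have [dvd_ab | ndvd_ab] := boolP (q%:Z %| a ^+ 2 - b ^+ 2)%Z; last first.
  have sum_ndvd x y : ~~ (q%:Z %| x ^+ 2 - y ^+ 2)%Z -> ~~ (q%:Z %| x + y)%Z.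
    by apply: contra => q_dvd; rewrite (_ : _ - _ = (x - y) * (x + y)) ?dvdz_mull //; ring.
  by rewrite !logn_absz_ndvd // sum_ndvd ?d_bc ?d_ca.
have a_b := dvdz_sqrB dvd_ab; have b_c := dvdz_sqrB (etrans d_bc dvd_ab).
have a_nd : ~~ (q%:Z %| a)%Z by apply: contra abc_nd => q_a; rewrite -b_c -a_b q_a.
have b_nd : ~~ (q%:Z %| b)%Z by rewrite -a_b.
have c_nd : ~~ (q%:Z %| c)%Z by rewrite -b_c.
rewrite (logn_absz_add _ a_nd) (logn_absz_add _ b_nd) (logn_absz_add _ c_nd).
rewrite v_bc v_ca -!mulnDl oddM; apply/nandP; left.
rewrite -!Fp_int_eq0 // !rmorphD /=.
apply: sums_eq0_count_even (Fp_two_nz q_pr q_odd) _ (Fp_int_sqr_eq dvd_ab) _.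
  by rewrite Fp_int_eq0.
by apply: Fp_int_sqr_eq; rewrite d_bc.
Qed.

End OddPrimeValuation.

Lemma sums_div8 (a b c : int) :
  (a = 1 %[mod 4])%Z -> (b = 1 %[mod 4])%Z -> (c = 1 %[mod 4])%Z ->
  exists2 N : int, N * 8 = (a + b) * (b + c) * (c + a) & (N = 1 %[mod 4])%Z.
Proof.
move=> a1 b1 c1.
have [A ->] : exists A, a = 4 * A + 1 by exists (a %/ 4)%Z; lia.
have [B ->] : exists B, b = 4 * B + 1 by exists (b %/ 4)%Z; lia.
have [C ->] : exists C, c = 4 * C + 1 by exists (c %/ 4)%Z; lia.
exists ((2 * A + 2 * B + 1) * (2 * B + 2 * C + 1) * (2 * C + 2 * A + 1)); first by ring.
apply/eqP; rewrite eqz_mod_dvd; apply/dvdzP.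
exists (A + B + C + (A + B) * (B + C) + (B + C) * (C + A) + (C + A) * (A + B)
        + 2 * (A + B) * (B + C) * (C + A)).
by ring.
Qed.

Lemma odd_half_absz_1mod4 (N : int) : (N = 1 %[mod 4])%Z -> odd (`|N|%N)./2 = (N < 0).
Proof. by move=> N1; rewrite -divn2; case: ltrP; lia. Qed.

Lemma Fp_euler_pow_1mod4 p (N : int) : (N = 1 %[mod 4])%Z ->
  (N%:~R : 'F_p) ^+ p./2 = (`|N|%:R) ^+ p./2 * (-1) ^+ (p./2 * (`|N|%N)./2).
Proof.
move=> N1; rewrite {1}[N]intEsign rmorphM rmorph_sign exprMn mulrC -exprM.
congr (_ * _); rewrite -[LHS]signr_odd -[RHS]signr_odd !oddM odd_half_absz_1mod4 //.
by rewrite oddb andbC.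
Qed.

Lemma logn_prime_mul8 r m : prime r -> odd r -> (0 < m)%N -> logn r (m * 8) = logn r m.
Proof.
move=> r_pr r_odd m_gt0; rewrite lognM // (@logn_coprime r 8) ?addn0 //.
rewrite prime_coprime // (_ : 8 = 2 ^ 3)%N // Euclid_dvdX // dvdn_prime2 //.
by rewrite andbT; apply: contraTneq r_odd => ->.
Qed.

Lemma euler_pow_prod_sums (p : nat) (e1 e2 e3 a b c N : int) : prime p -> odd p ->
  e1 + e2 + e3 = 0 -> e1 * a ^+ 2 + e2 * b ^+ 2 + e3 * c ^+ 2 = 0 ->
  gcdz (gcdz a b) c = 1 -> N * 8 = (a + b) * (b + c) * (c + a) ->
  (N = 1 %[mod 4])%Z -> ~~ (p%:Z %| N)%Z ->
  (forall r : nat, prime r -> odd r -> (r%:Z %| e1 * e2 * e3)%Z -> is_nonzero_qr p%:Z r) ->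
  (N%:~R : 'F_p) ^+ p./2 = 1.
Proof.
move=> p_pr p_odd e_sum conic abc_coprime N8 N1 p_ndvd_N p_qr.
have M_odd : odd `|N|%N by lia.
have M_gt0 : (0 < `|N|)%N by lia.
have N_nz : N != 0 by rewrite -absz_gt0.
rewrite Fp_euler_pow_1mod4 // jacobi_reciprocity //; last first.
- move=> r r_pr r_dvd_M; have r_odd := dvdn_odd r_dvd_M M_odd.
  have [r_dvd_e | r_ndvd_e] := boolP (r%:Z %| e1 * e2 * e3)%Z.
    by left; apply: (nonzero_qr_euler_pow r_pr r_odd); apply: p_qr.
  right; rewrite -(logn_prime_mul8 r_pr r_odd M_gt0) -[(_ * 8)%N]/(`|N| * `|8|)%N -abszM N8.
  apply: (logn_prod_sums_even r_pr r_odd r_ndvd_e e_sum conic); last by rewrite -N8 mulf_neq0.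
  rewrite andbA -!dvdz_gcd abc_coprime dvdzE absz_nat dvdn1.
  by apply: contraTneq r_pr => ->.
- by rewrite -exprD addnn -signr_odd odd_double.
Qed.

Theorem lemma2p8 (e1 e2 e3 a b c : int) (n : nat) :
  e1 != 0 -> e2 != 0 -> e3 != 0 ->
  e1 + e2 + e3 = 0 ->
  gcdz (gcdz e1 e2) e3 \in [:: 1; 2] ->
  v2 e1 = v2 e2 -> (v2 e2 < v2 e3)%N ->
  gcdz (gcdz a b) c = 1 ->
  ~~ (2 %| a)%Z -> ~~ (2 %| b)%Z -> ~~ (2 %| c)%Z ->
  e1 * a ^+ 2 + e2 * b ^+ 2 + e3 * c ^+ 2 = 0 ->
  (a = 1 %[mod 4])%Z -> (b = 1 %[mod 4])%Z -> (c = 1 %[mod 4])%Z ->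
  (0 < n)%N ->
  (forall p q : nat, prime p -> (p %| n)%N ->
     prime q -> odd q -> (q%:Z %| e1 * e2 * e3)%Z ->
     is_nonzero_qr p%:Z q) ->
  exists N : int,
    N * 8 = (a + b) * (b + c) * (c + a) /\
    (N = 1 %[mod 4])%Z /\
    (forall p : nat, prime p -> (p %| n)%N -> is_qr N p).
Proof.
move=> _ _ _ e_sum _ _ _ abc_coprime _ _ _ conic a1 b1 c1 _ n_qr.
have [N N8 N1] := sums_div8 a1 b1 c1.
exists N; split=> //; split=> // p p_pr p_dvd_n.
have [-> | p_neq2] := eqVneq p 2.
  exists 1; apply/eqP; rewrite eqz_mod_dvd -opprB rpredN.
  by apply: (@dvdz_trans 4); rewrite // -eqz_mod_dvd; apply/eqP.
have p_odd : odd p by apply: contraNT p_neq2 => /(prime_oddPn p_pr) ->.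
have [p_dvd_N | p_ndvd_N] := boolP (p%:Z %| N)%Z.
  by exists 0; apply/eqP; rewrite eqz_mod_dvd expr0n sub0r rpredN.
apply/is_qr_Fp/Fp_euler_criterion => //.
apply: (euler_pow_prod_sums p_pr p_odd e_sum conic abc_coprime N8 N1 p_ndvd_N).
by move=> r r_pr r_odd; apply: n_qr.
Qed.
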